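(* Let $m\ge2$, $n\ge1$, and let $\alpha:(\mathbb Z[1/m],+)\to U_n(\mathbb Z[1/m])$ be an injective group homomorphism, with image $H=\alpha(\mathbb Z[1/m])$. Then the isolator $I(H)=\{g\in U_n(\mathbb Z[1/m]): g^k\in H\text{ for some integer }k\ge1\}$ is an abelian subgroup of $U_n(\mathbb Z[1/m])$, and the quotient group $I(H)/H$ has finite exponent.
   Context: $U_n(\mathbb Z[1/m])$ denotes the group of upper triangular $n\times n$ matrices with entries in $\mathbb Z[1/m]$ and all diagonal entries equal to $1$. *)

From mathcomp Require Import all_boot all_order all_algebra.
Unset Printing Implicit Defensive.
Import Order.TTheory GRing.Theory Num.Theory.
Local Open Scope ring_scope.

Definition Z1m (m : nat) (q : rat) : Prop :=
  exists (z : int) (k : nat), q = z%:~R / (m%:R ^+ k).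

Definition Un (m n : nat) (A : 'M[rat]_n) : Prop :=
  (forall i j : 'I_n, (j < i)%N -> A i j = 0) /\
  (forall i : 'I_n, A i i = 1) /\
  (forall i j : 'I_n, Z1m m (A i j)).

(* alpha : (Z[1/m],+) -> U_n(Z[1/m]) is a group homomorphism
   (alpha is given as a function on rat; only its values on Z[1/m] matter) *)
Definition is_hom_Z1m_Un (m n : nat) (alpha : rat -> 'M[rat]_n) : Prop :=
  (forall x, Z1m m x -> Un m n (alpha x)) /\
  (forall x y, Z1m m x -> Z1m m y -> alpha (x + y) = alpha x *m alpha y).

Definition injective_on_Z1m (m n : nat) (alpha : rat -> 'M[rat]_n) : Prop :=
  forall x y, Z1m m x -> Z1m m y -> alpha x = alpha y -> x = y.

Definition image_Z1m (m n : nat) (alpha : rat -> 'M[rat]_n) (g : 'M[rat]_n) : Prop :=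
  exists x, Z1m m x /\ g = alpha x.

Definition mxpow {n : nat} (g : 'M[rat]_n) (k : nat) : 'M[rat]_n :=
  iter k (mulmx g) 1%:M.

Definition isolator (m n : nat) (H : 'M[rat]_n -> Prop) (g : 'M[rat]_n) : Prop :=
  Un m n g /\ exists k : nat, (0 < k)%N /\ H (mxpow g k).

From mathcomp Require Import all_boot all_order all_algebra.
From mathcomp Require Import zify ring.
Import Order.TTheory GRing.Theory Num.Theory.
Local Open Scope ring_scope.
Set Implicit Arguments. Unset Strict Implicit.

(* Matrices over a numeric domain (characteristic zero) carry the filtration
   Fil d = {A | A i j = 0 whenever j < i + d} by superdiagonals; g is
   unipotent when g - 1 lies in Fil 1.  The key computation (defect_exp) is
   that x g^k - h^k x = k (x g - h x) modulo the next step of the filtration.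
   Dividing by k gives that x g^k = h^k x forces x g = h x (root_conj), hence
   uniqueness of roots, and that g and g^k have the same depth (root_Fil).
   From these, the isolator I(H) of H = alpha(Z[1/m]) is an abelian group.
   For the exponent, let d be the depth of alpha 1 and c a nonzero entry
   (i0, j0) of alpha 1 - 1 on the d-th superdiagonal.  The coordinate
   lam g = (g - 1) i0 j0 is a homomorphism on 1 + Fil d, which contains all
   of I(H); moreover lam (alpha y) = c y and lam is injective on I(H).  As
   e = |num c| is an integral multiple z of c, every g in I(H) satisfies
   g^e = alpha (z lam g). *)

Lemma mul_sub1 (R : pzRingType) (a b : R) :
  a * b - 1 = (a - 1) * (b - 1) + (a - 1) + (b - 1).
Proof. by rewrite mulrBl mulrBr !mul1r mulr1 addrAC subrK addrA subrK. Qed.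

Section Filtration.
Variables (R : numDomainType) (n : nat).
Notation M := 'M[R]_n.+1.

Definition Fil (d : nat) (A : M) : Prop :=
  forall i j : 'I_n.+1, (j < i + d)%N -> A i j = 0.

Definition unip (g : M) : Prop := Fil 1 (g - 1).

Lemma Fil_weak a b (A : M) : (b <= a)%N -> Fil a A -> Fil b A.
Proof. by move=> leba hA i j hij; apply: hA; lia. Qed.

Lemma Fil0 d : Fil d (0 : M).
Proof. by move=> i j _; rewrite mxE. Qed.

Lemma Fil_add d (A B : M) : Fil d A -> Fil d B -> Fil d (A + B).
Proof. by move=> hA hB i j hij; rewrite mxE hA ?hB ?addr0. Qed.

Lemma Fil_opp d (A : M) : Fil d A -> Fil d (- A).
Proof. by move=> hA i j hij; rewrite mxE hA ?oppr0. Qed.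

Lemma Fil_sub d (A B : M) : Fil d A -> Fil d B -> Fil d (A - B).
Proof. by move=> hA hB; apply: Fil_add (Fil_opp hB). Qed.

Lemma Fil_muln d k (A : M) : Fil d A -> Fil d (A *+ k).
Proof. by move=> hA i j hij; rewrite mulmxnE hA // mul0rn. Qed.

Lemma Fil_mul a b (A B : M) : Fil a A -> Fil b B -> Fil (a + b) (A * B).
Proof.
move=> hA hB i j hij; rewrite -mulmxE mxE; apply: big1 => k _.
have [hk|hk] := ltnP k (i + a); first by rewrite hA // mul0r.
by rewrite hB ?mulr0 //; lia.
Qed.

Lemma Fil_mulnK d k (A : M) : (0 < k)%N -> Fil d (A *+ k) -> Fil d A.
Proof.
move=> k_gt0 hA i j hij; have /eqP := hA i j hij.
by rewrite mulmxnE mulrn_eq0 eqn0Ngt k_gt0 => /eqP.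
Qed.

Lemma Fil_top (A : M) : Fil n.+1 A -> A = 0.
Proof. by move=> hA; apply/matrixP => i j; rewrite mxE hA //; have := ltn_ord j; lia. Qed.

Lemma Fil0_1 : Fil 0 (1 : M).
Proof. by move=> i j hij; rewrite mxE; case: eqP => // eij; subst; lia. Qed.

Lemma unip1 : unip 1.
Proof. by rewrite /unip subrr; apply: Fil0. Qed.

Lemma unip_Fil0 (g : M) : unip g -> Fil 0 g.
Proof. by move=> hg; rewrite -[g](subrK 1); apply: Fil_add Fil0_1; apply: Fil_weak hg. Qed.

Lemma Fil_mul1 d (A B : M) : (1 <= d)%N ->
  Fil d (A - 1) -> Fil d (B - 1) -> Fil d (A * B - 1).
Proof.
move=> hd hA hB.
rewrite mul_sub1; do 2?apply: Fil_add => //; apply: Fil_weak (Fil_mul hA hB); lia.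
Qed.

Lemma Fil_exp1 d (A : M) k : (1 <= d)%N -> Fil d (A - 1) -> Fil d (A ^+ k - 1).
Proof.
move=> hd hA; elim: k => [|k IH]; first by rewrite expr0 subrr; apply: Fil0.
by rewrite exprS; apply: Fil_mul1.
Qed.

Lemma Fil_nilpotent (N : M) k : Fil 1 N -> Fil k (N ^+ k).
Proof.
move=> hN; elim: k => [|k IH]; first by rewrite expr0; apply: Fil0_1.
by rewrite exprSr; apply: Fil_weak (Fil_mul IH hN); lia.
Qed.

(* a unipotent matrix is invertible, with inverse given by the finite
   geometric series in the nilpotent matrix 1 - g *)
Lemma unip_inv (g : M) : unip g ->
  g \is a GRing.unit /\ g^-1 = \sum_(i < n.+1) (1 - g) ^+ i.
Proof.
move=> hg; have hN : Fil 1 (1 - g) by rewrite -opprB; apply: Fil_opp.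
have geom k : (1 - (1 - g)) * \sum_(i < k) (1 - g) ^+ i = 1 - (1 - g) ^+ k.
  elim: k => [|k IH]; first by rewrite big_ord0 mulr0 expr0 subrr.
  rewrite big_ord_recr /= mulrDr IH mulrBl mul1r exprSr -exprS.
  by rewrite -exprSr addrA subrK.
have ginv : g * \sum_(i < n.+1) (1 - g) ^+ i = 1.
  have := geom n.+1; rewrite subKr => ->.
  by rewrite (Fil_top (Fil_nilpotent (k := n.+1) hN)) subr0.
have [gU _] := mulmx1_unit (ginv : g *m _ = 1%:M).
by split=> //; rewrite -[RHS](mulKr gU) ginv mulr1.
Qed.

Lemma Fil_inv1 d (g : M) : unip g -> Fil d (g - 1) -> Fil d (g^-1 - 1).
Proof.
move=> hg hd; have [gU ginvE] := unip_inv hg.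
have ginv0 : Fil 0 g^-1.
  have hN : Fil 1 (1 - g) by rewrite -opprB; apply: Fil_opp.
  rewrite ginvE; apply: (big_ind (Fil 0)); [exact: Fil0 | exact: Fil_add |] => i _.
  exact: Fil_weak (Fil_nilpotent (k := i) hN).
have -> : g^-1 - 1 = - (g^-1 * (g - 1)) by rewrite mulrBr mulVr // mulr1 opprB.
exact: Fil_opp (Fil_mul ginv0 hd).
Qed.

End Filtration.

Section Roots.
Variables (R : numDomainType) (n : nat).
Notation M := 'M[R]_n.+1.
Implicit Types (x g h : M).

(* the defect D_k = x g^k - h^k x satisfies D_(k+1) = D_k g + h^k D_1, hence
   D_k = k D_1 modulo one more step of the filtration *)
Lemma defect_exp d x g h : unip g -> unip h -> Fil d (x * g - h * x) -> forall k,
  Fil d.+1 (x * g ^+ k - h ^+ k * x - (x * g - h * x) *+ k).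
Proof.
move=> hg hh hE; set E := x * g - h * x.
elim=> [|k IH]; first by rewrite !expr0 mulr1 mul1r mulr0n !subrr; apply: Fil0.
set D := x * g ^+ k - h ^+ k * x.
have -> : x * g ^+ k.+1 - h ^+ k.+1 * x = D * g + h ^+ k * E.
  by rewrite /D /E !exprSr mulrBl mulrBr !mulrA subrKA.
have -> : D * g + h ^+ k * E - E *+ k.+1 =
    (D - E *+ k) * g + E *+ k * (g - 1) + (h ^+ k - 1) * E.
  clearbody D E.
  by rewrite mulrS !mulrBl mulrBr mulr1 mul1r subrKA [E + _]addrC opprD addrACA.
apply: Fil_add; first apply: Fil_add.
- by rewrite -[d.+1]addn0; apply: Fil_mul (unip_Fil0 hg).
- by rewrite -addn1; apply: Fil_mul (Fil_muln _ hE) hg.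
- by rewrite -add1n; apply: Fil_mul hE; apply: Fil_exp1.
Qed.


Lemma root_conj x g h k : Fil 0 x -> unip g -> unip h -> (0 < k)%N ->
  x * g ^+ k = h ^+ k * x -> x * g = h * x.
Proof.
move=> hx hg hh k_gt0 conj_k; apply/eqP; rewrite -subr_eq0; apply/eqP.
suff FilE d : Fil d (x * g - h * x) by apply: Fil_top (FilE n.+1).
elim: d => [|d IH].
  by apply: Fil_sub; [exact: Fil_mul hx (unip_Fil0 hg) | exact: Fil_mul (unip_Fil0 hh) hx].
have := defect_exp hg hh IH k; rewrite conj_k subrr sub0r.
by move/Fil_opp; rewrite opprK; apply: Fil_mulnK.
Qed.

Lemma root_uniq g h k : unip g -> unip h -> (0 < k)%N -> g ^+ k = h ^+ k -> g = h.
Proof.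
move=> hg hh k_gt0 e; have := root_conj (@Fil0_1 R n) hg hh k_gt0.
by rewrite !mul1r !mulr1; apply.
Qed.

Lemma root_Fil d g k : unip g -> (0 < k)%N -> Fil d (g ^+ k - 1) -> Fil d (g - 1).
Proof.
move=> hg k_gt0 hk; suff FilD d' : (d' <= d)%N -> Fil d' (g - 1) by apply: FilD.
elim: d' => [_|d' IH le_d'd]; first exact: Fil_weak hg.
have hdef : Fil d'.+1 (g ^+ k - 1 - (g - 1) *+ k).
  have := defect_exp (x := 1) hg (@unip1 R n) _ k.
  by rewrite !mul1r !mulr1 expr1n; apply; apply: IH; apply: ltnW.
apply: (Fil_mulnK k_gt0).
rewrite -[_ *+ k](subKr (g ^+ k - 1)); apply: Fil_sub hdef.
exact: Fil_weak hk.
Qed.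

End Roots.

Lemma leading_entry (R : numDomainType) n (N : 'M[R]_n.+1) : Fil 1 N -> N <> 0 ->
  exists d (i0 j0 : 'I_n.+1), [/\ (1 <= d)%N, Fil d N, (j0 < i0 + d.+1)%N & N i0 j0 != 0].
Proof.
move=> hN1 N_neq0.
have FilP d : reflect (Fil d N)
    [forall i : 'I_n.+1, forall j : 'I_n.+1, (j < i + d)%N ==> (N i j == 0)].
  apply: (iffP forallP) => [H i j hij|H i].
    by have /implyP /(_ hij) /eqP := forallP (H i) j.
  by apply/forallP => j; apply/implyP => hij; rewrite H.
suff [d [d_gt0 hd /FilP]] : exists d, [/\ (1 <= d)%N, Fil d N & ~ Fil d.+1 N].
  rewrite negb_forall => /existsP [i0]; rewrite negb_forall => /existsP [j0].
  by rewrite negb_imply => /andP [hij N_ij]; exists d, i0, j0.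
suff climb d : ~ Fil d.+1 N -> exists d', [/\ (1 <= d')%N, Fil d' N & ~ Fil d'.+1 N].
  by apply: (climb n.+1) => /(Fil_weak (leqnSn _)) /Fil_top.
elim: d => [|d IH] hd; first by case: (hd hN1).
by case: (FilP d.+1) => hF; [exists d.+1 | apply: IH].
Qed.

Section LeadingEntry.
Variables (R : numDomainType) (n d : nat) (i0 j0 : 'I_n.+1).
Hypotheses (d_gt0 : (1 <= d)%N) (ij0 : (j0 < i0 + d.+1)%N).
Notation M := 'M[R]_n.+1.

(* the entry (i0, j0) of g - 1: on the group 1 + Fil d it is additive,
   because the product of two elements of Fil d vanishes at (i0, j0) *)
Definition lam (g : M) : R := (g - 1) i0 j0.

Lemma lam_mul (g h : M) : Fil d (g - 1) -> Fil d (h - 1) -> lam (g * h) = lam g + lam h.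
Proof.
move=> hg hh; have prod0 : ((g - 1) * (h - 1)) i0 j0 = 0 by apply: Fil_mul hg hh _ _ _; lia.
by rewrite /lam mul_sub1 [LHS]mxE [X in X + _]mxE prod0 add0r.
Qed.

Lemma lam_exp (g : M) k : Fil d (g - 1) -> lam (g ^+ k) = lam g *+ k.
Proof.
move=> hg; elim: k => [|k IH]; first by rewrite expr0 /lam subrr mxE.
by rewrite exprS lam_mul ?IH ?mulrS //; apply: Fil_exp1.
Qed.

Lemma lam_inv (g : M) : Fil d (g - 1) -> lam g^-1 = - lam g.
Proof.
move=> hg; have hg1 : unip g by apply: Fil_weak hg.
have [gU _] := unip_inv hg1.
apply/eqP; rewrite -addr_eq0 addrC -lam_mul ?mulrV //; last exact: Fil_inv1.
by rewrite /lam subrr mxE.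
Qed.

End LeadingEntry.

Section ZOneOverM.
Variables (m : nat) (n : nat).
Hypothesis m_gt0 : (0 < m)%N.

Lemma Z1m_int (z : int) : Z1m m z%:~R.
Proof. by exists z, 0%N; rewrite expr0 divr1. Qed.

Lemma Z1m_nat (k : nat) : Z1m m k%:R.
Proof. exact: (Z1m_int k). Qed.

Lemma expm_neq0 k : (m%:R : rat) ^+ k != 0.
Proof. by rewrite expf_neq0 // pnatr_eq0 -lt0n. Qed.

Lemma Z1m_add x y : Z1m m x -> Z1m m y -> Z1m m (x + y).
Proof.
move=> [z1 [a ->]] [z2 [b ->]].
have castX k : ((m ^ k)%N%:Z)%:~R = m%:R ^+ k :> rat by rewrite -natrX.
exists (z1 * (m ^ b)%N%:Z + z2 * (m ^ a)%N%:Z), (a + b)%N.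
rewrite intrD !intrM !castX exprD.
by field; rewrite !expm_neq0.
Qed.

Lemma Z1m_opp x : Z1m m x -> Z1m m (- x).
Proof. by move=> [z [a ->]]; exists (- z), a; rewrite intrN mulNr. Qed.

Lemma Z1m_sub x y : Z1m m x -> Z1m m y -> Z1m m (x - y).
Proof. by move=> hx hy; apply: Z1m_add (Z1m_opp hy). Qed.

Lemma Z1m_mul x y : Z1m m x -> Z1m m y -> Z1m m (x * y).
Proof.
move=> [z1 [a ->]] [z2 [b ->]]; exists (z1 * z2), (a + b)%N.
by rewrite intrM exprD; field; rewrite !expm_neq0.
Qed.

Lemma Z1m_muln x k : Z1m m x -> Z1m m (x *+ k).
Proof. by move=> hx; rewrite -mulr_natr; apply: Z1m_mul hx (Z1m_nat k). Qed.

Definition ZM (A : 'M[rat]_n.+1) : Prop := forall i j, Z1m m (A i j).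

Lemma ZM_1 : ZM 1.
Proof. by move=> i j; rewrite mxE; apply: Z1m_nat. Qed.

Lemma ZM_sub A B : ZM A -> ZM B -> ZM (A - B).
Proof. by move=> hA hB i j; rewrite !mxE; apply: Z1m_sub. Qed.

Lemma ZM_mul A B : ZM A -> ZM B -> ZM (A * B).
Proof.
move=> hA hB i j; rewrite -mulmxE mxE.
apply: (big_ind (Z1m m)); [exact: Z1m_nat 0 | exact: Z1m_add |] => k _.
exact: Z1m_mul.
Qed.

Lemma ZM_inv g : unip g -> ZM g -> ZM g^-1.
Proof.
move=> hg hZ; have [_ ->] := unip_inv hg.
have ZM_exp e : ZM ((1 - g) ^+ e).
  elim: e => [|e IH]; first by rewrite expr0; apply: ZM_1.
  by rewrite exprS; apply: ZM_mul IH; apply: ZM_sub ZM_1 hZ.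
move=> i j; rewrite summxE.
apply: (big_ind (Z1m m)); [exact: Z1m_nat 0 | exact: Z1m_add |] => k _.
exact: ZM_exp.
Qed.

End ZOneOverM.

Lemma absnumq_div (c : rat) : c != 0 -> exists z : int, (`|numq c|%N%:R : rat) / c = z%:~R.
Proof.
move=> c_neq0; exists (sgz (numq c) * denq c).
have nq : (numq c)%:~R != 0 :> rat by rewrite intr_eq0 numq_eq0.
have dq : (denq c)%:~R != 0 :> rat by rewrite intr_eq0 denq_eq0.
rewrite -[X in _ / X]divq_num_den -[`|_|%N%:R]/((`|numq c|%N : int)%:~R) abszEsg !intrM.
by field; apply/andP.
Qed.

Lemma mxpowE n (g : 'M[rat]_n.+1) k : mxpow g k = g ^+ k.
Proof. by elim: k => [|k IH]; rewrite /mxpow /= ?idmxE // -/(mxpow g k) IH exprS mulmxE. Qed.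

Lemma UnE m n (g : 'M[rat]_n.+1) : Un m n.+1 g <-> unip g /\ ZM m g.
Proof.
split=> [[lower [diag entries]] | [hg hZ]].
  split=> // i j le_ji; rewrite !mxE -val_eqE /=.
  have [lt_ji|le_ij] := ltnP j i; first by rewrite lower // gtn_eqF // subr0.
  by rewrite (_ : j = i) ?diag ?eqxx ?subrr //; apply: ord_inj; lia.
split; last split => //.
  move=> i j lt_ji; have := hg i j (ltac:(lia)).
  by rewrite !mxE -val_eqE /= gtn_eqF // subr0.
by move=> i; have /eqP := hg i i (ltac:(lia)); rewrite !mxE eqxx subr_eq0 => /eqP.
Qed.

Section Isolator.
Variables (m n : nat) (alpha : rat -> 'M[rat]_n.+1).
Hypotheses (m_gt0 : (0 < m)%N) (alpha_hom : is_hom_Z1m_Un m n.+1 alpha).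
Notation M := 'M[rat]_n.+1.

Lemma alpha_unip y : Z1m m y -> unip (alpha y).
Proof. by move=> hy; have [] := (UnE m (alpha y)).1 (alpha_hom.1 y hy). Qed.

Lemma alpha_mul x y : Z1m m x -> Z1m m y -> alpha (x + y) = alpha x * alpha y.
Proof. by move=> hx hy; rewrite alpha_hom.2. Qed.

Lemma alpha0 : alpha 0 = 1.
Proof.
have [aU _] := unip_inv (alpha_unip (Z1m_nat m 0)).
by apply: (mulrI aU); rewrite -alpha_mul ?addr0 ?mulr1 //; apply: Z1m_nat 0.
Qed.

Lemma alpha_muln y k : Z1m m y -> alpha (y *+ k) = alpha y ^+ k.
Proof.
move=> hy; elim: k => [|k IH]; first by rewrite mulr0n expr0 alpha0.
by rewrite mulrS exprS alpha_mul ?IH //; exact: (Z1m_muln m_gt0 k hy).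
Qed.

Lemma alpha_opp y : Z1m m y -> alpha (- y) = (alpha y)^-1.
Proof.
move=> hy; have [aU _] := unip_inv (alpha_unip hy).
by apply: (mulrI aU); rewrite -alpha_mul ?subrr ?alpha0 ?mulrV //; apply: Z1m_opp.
Qed.

Lemma alpha_comm x y : Z1m m x -> Z1m m y -> alpha x * alpha y = alpha y * alpha x.
Proof. by move=> hx hy; rewrite -!alpha_mul // addrC. Qed.

Definition inI (g : M) : Prop :=
  [/\ unip g, ZM m g & exists2 k, (0 < k)%N & image_Z1m m n.+1 alpha (g ^+ k)].

Lemma isolatorE g : isolator m n.+1 (image_Z1m m n.+1 alpha) g <-> inI g.
Proof.
rewrite /isolator UnE; split=> [[[hg hZ] [k [k_gt0 hk]]] | [hg hZ [k k_gt0 hk]]].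
  by split=> //; exists k; rewrite -?mxpowE.
by split=> //; exists k; rewrite mxpowE.
Qed.

Lemma inI_alpha y : Z1m m y -> inI (alpha y).
Proof.
move=> hy; have [hg hZ] := (UnE m _).1 (alpha_hom.1 y hy).
by split=> //; exists 1%N => //; exists y; rewrite expr1.
Qed.

(* I(H) is abelian: roots of commuting elements commute *)
Lemma inI_comm g h : inI g -> inI h -> g * h = h * g.
Proof.
move=> [ug _ [a a_gt0 [x [hx ga]]]] [uh _ [b b_gt0 [y [hy hb]]]].
have alpha_x_h : alpha x * h = h * alpha x.
  by apply: (root_conj (unip_Fil0 (alpha_unip hx)) uh uh b_gt0); rewrite hb alpha_comm.
by symmetry; apply: (root_conj (unip_Fil0 uh) ug ug a_gt0); rewrite ga alpha_x_h.
Qed.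

Lemma inI_1 : inI 1.
Proof. by rewrite -alpha0; apply: inI_alpha (Z1m_nat m 0). Qed.

Lemma inI_mul g h : inI g -> inI h -> inI (g * h).
Proof.
move=> Ig Ih; have gh := inI_comm Ig Ih.
move: Ig Ih => [ug Zg [a a_gt0 [x [hx ga]]]] [uh Zh [b b_gt0 [y [hy hb]]]].
split; [exact: Fil_mul1 | exact: (ZM_mul m_gt0 Zg Zh) | exists (a * b)%N].
  by rewrite muln_gt0 a_gt0.
exists (x *+ b + y *+ a); split.
  exact: (Z1m_add m_gt0 (Z1m_muln m_gt0 b hx) (Z1m_muln m_gt0 a hy)).
rewrite exprMn_comm // exprM [(a * b)%N]mulnC exprM ga hb.
by rewrite -!alpha_muln // alpha_mul //; exact: (Z1m_muln m_gt0).
Qed.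

Lemma inI_inv g : inI g -> inI g^-1.
Proof.
move=> [ug Zg [a a_gt0 [x [hx ga]]]].
split; [exact: Fil_inv1 | exact: (ZM_inv m_gt0 ug Zg) | exists a => //].
by exists (- x); split; [apply: Z1m_opp | rewrite exprVn ga alpha_opp].
Qed.

Lemma inI_exp g k : inI g -> inI (g ^+ k).
Proof.
move=> Ig; elim: k => [|k IH]; first by rewrite expr0; apply: inI_1.
by rewrite exprS; apply: inI_mul.
Qed.

Section LeadingCoordinate.
Variables (d : nat) (i0 j0 : 'I_n.+1).
Hypotheses (d_gt0 : (1 <= d)%N) (ij0 : (j0 < i0 + d.+1)%N).
Hypothesis alpha1_deep : Fil d (alpha 1 - 1).
Notation lam := (lam i0 j0).
Notation c := (lam (alpha 1)).

Lemma alpha_lam_int (z : int) :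
  Fil d (alpha z%:~R - 1) /\ lam (alpha z%:~R) = c * z%:~R.
Proof.
have alpha_nat N : Fil d (alpha N%:R - 1) /\ lam (alpha N%:R) = c * N%:R.
  rewrite (alpha_muln N (Z1m_nat m 1)); split; first exact: Fil_exp1.
  by rewrite (lam_exp d_gt0 ij0) // mulr_natr.
case: z => N; first exact: alpha_nat.
rewrite NegzE intrN alpha_opp; last exact: Z1m_nat.
have [deep lamN] := alpha_nat N.+1.
split; first exact: Fil_inv1 (alpha_unip (Z1m_nat m N.+1)) deep.
by rewrite (lam_inv d_gt0 ij0) // lamN mulrN.
Qed.

Lemma alpha_lam y : Z1m m y -> Fil d (alpha y - 1) /\ lam (alpha y) = c * y.
Proof.
move=> hy; have [z [j ey]] := hy.
have mj_neq0 : (m ^ j)%N%:R != 0 :> rat by rewrite natrX expm_neq0.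
have yz : y *+ (m ^ j) = z%:~R.
  by rewrite ey -[_ *+ (m ^ j)]mulr_natr natrX divfK ?expm_neq0.
have [deep_z lam_z] := alpha_lam_int z.
have pow_y : alpha y ^+ (m ^ j) = alpha z%:~R by rewrite -alpha_muln // yz.
have deep_y : Fil d (alpha y - 1).
  have mj_gt0 : (0 < m ^ j)%N by rewrite expn_gt0 m_gt0.
  by apply: (root_Fil (alpha_unip hy) mj_gt0); rewrite pow_y.
split=> //; apply: (mulIf mj_neq0).
by rewrite !mulr_natr -(lam_exp d_gt0 ij0 _ deep_y) pow_y lam_z -mulrnAr yz.
Qed.

(* since roots keep their depth, I(H) lies in 1 + Fil d *)
Lemma inI_deep g : inI g -> Fil d (g - 1).
Proof.
move=> [ug _ [k k_gt0 [x [hx gk]]]]; apply: (root_Fil ug k_gt0).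
by rewrite gk; have [] := alpha_lam hx.
Qed.

Hypothesis c_neq0 : c != 0.

Lemma lam_kernel g : inI g -> lam g = 0 -> g = 1.
Proof.
move=> Ig lam_g; have [ug _ [k k_gt0 [x [hx gk]]]] := Ig.
have [_ lam_x] := alpha_lam hx.
have x0 : x = 0.
  have /eqP : c * x = 0.
    by rewrite -lam_x -gk (lam_exp d_gt0 ij0 _ (inI_deep Ig)) lam_g mul0rn.
  by rewrite mulf_eq0 (negbTE c_neq0) => /eqP.
apply: (root_uniq ug (@unip1 _ n) k_gt0).
by rewrite gk x0 alpha0 expr1n.
Qed.

Lemma lam_inj g h : inI g -> inI h -> lam g = lam h -> g = h.
Proof.
move=> Ig Ih lam_gh; have [uh _ _] := Ih; have [hU _] := unip_inv uh.
have gh1 : g * h^-1 = 1.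
  apply: lam_kernel; first exact: inI_mul Ig (inI_inv Ih).
  rewrite (lam_mul d_gt0 ij0 (inI_deep Ig) (inI_deep (inI_inv Ih))).
  by rewrite (lam_inv d_gt0 ij0 (inI_deep Ih)) lam_gh subrr.
by rewrite -[g]mulr1 -(mulVr hU) mulrA gh1 mul1r.
Qed.

(* with e = |num c|, e/c is an integer z, and g^e = alpha (z lam g) *)
Lemma inI_exponent_lam :
  exists2 e, (0 < e)%N & forall g, inI g -> image_Z1m m n.+1 alpha (g ^+ e).
Proof.
have [z ez] := absnumq_div c_neq0.
exists `|numq c|%N => [|g Ig]; first by rewrite absz_gt0 numq_eq0.
have [_ Zg _] := Ig.
have lam_g : Z1m m (lam g) := ZM_sub m_gt0 Zg (@ZM_1 m n) i0 j0.
have hy : Z1m m (lam g * z%:~R) := Z1m_mul m_gt0 lam_g (Z1m_int m z).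
exists (lam g * z%:~R); split=> //.
apply: lam_inj (inI_exp _ Ig) (inI_alpha hy) _; have [_ ->] := alpha_lam hy.
by rewrite (lam_exp d_gt0 ij0 _ (inI_deep Ig)) -ez mulrC -mulrA divfK // mulr_natr.
Qed.

End LeadingCoordinate.

(* injectivity makes alpha 1 - 1 nonzero; its leading entry gives a
   coordinate lam to which the previous section applies *)
Lemma inI_exponent : injective_on_Z1m m n.+1 alpha ->
  exists2 e, (0 < e)%N & forall g, inI g -> image_Z1m m n.+1 alpha (g ^+ e).
Proof.
move=> alpha_inj.
have alpha1_neq1 : alpha 1 - 1 <> 0.
  move/eqP; rewrite subr_eq0 -alpha0 => /eqP /alpha_inj.
  by move=> /(_ (Z1m_nat m 1) (Z1m_nat m 0)).
have [d [i0 [j0 [d_gt0 deep ij0 c_neq0]]]] :=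
  leading_entry (alpha_unip (Z1m_nat m 1)) alpha1_neq1.
exact: (inI_exponent_lam d_gt0 ij0 deep c_neq0).
Qed.

End Isolator.

Unset Implicit Arguments.

Theorem lemma4p3 (m n : nat) (alpha : rat -> 'M[rat]_n) :
  (2 <= m)%N -> (1 <= n)%N ->
  is_hom_Z1m_Un m n alpha -> injective_on_Z1m m n alpha ->
  let I := isolator m n (image_Z1m m n alpha) in
  (* I(H) is a subgroup of U_n(Z[1/m]) *)
  (I 1%:M /\
   (forall g h, I g -> I h -> I (g *m h)) /\
   (forall g, I g -> I (invmx g))) /\
  (* I(H) is abelian *)
  (forall g h, I g -> I h -> g *m h = h *m g) /\
  (* I(H)/H has finite exponent *)
  (exists e : nat, (0 < e)%N /\
     forall g, I g -> image_Z1m m n alpha (mxpow g e)).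
Proof.
move=> m_ge2; have m_gt0 : (0 < m)%N by apply: ltnW.
case: n alpha => [//|n] alpha _ alpha_hom alpha_inj I.
have IE g : I g <-> inI m alpha g := isolatorE m alpha g.
split; [split; [|split] | split].
- by apply/IE; rewrite idmxE; exact (inI_1 alpha_hom).
- by move=> g h /IE Ig /IE Ih; apply/IE; exact (inI_mul m_gt0 alpha_hom Ig Ih).
- by move=> g /IE Ig; apply/IE; exact (inI_inv m_gt0 alpha_hom Ig).
- by move=> g h /IE Ig /IE Ih; rewrite mulmxE; exact (inI_comm alpha_hom Ig Ih).
have [e e_gt0 exp_e] := inI_exponent m_gt0 alpha_hom alpha_inj.
by exists e; split=> // g /IE /exp_e; rewrite mxpowE.
Qed.
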